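(* Given any ILPDC $C$ and any ILFST $T$, there is an ILPDC $N$ such that $N(x)=C(T(x))$ for all $x\in\{0,1\}^*$. Similarly, given any ILUPDC $C$ and any ILFST $T$, there is an ILUPDC $N$ such that $N(x)=C(T(x))$ for all $x\in\{0,1\}^*$.
   Context: A finite-state transducer (FST) is $T=(Q,q_0,\delta,\nu)$ with finite state set $Q$, start state $q_0$, transition function $\delta:Q\times\{0,1\}\to Q$ and output function $\nu:Q\times\{0,1\}\to\{0,1\}^*$; with $\hat\delta$ the extended transition function, $T(\lambda)=\lambda$ and $T(xb)=T(x)\nu(\hat\delta(x),b)$. $T$ is information lossless (an ILFST) if $x\mapsto(T(x),\hat\delta(x))$ is injective. A pushdown compressor (PDC) is a tuple $C=(Q,\Gamma,\delta,\nu,q_0,z_0,c)$ where $Q$ is a finite nonempty set of states, $\Gamma=\{0,1,z_0\}$ is the stack alphabet with $z_0$ the bottom-of-stack symbol, $\delta: Q\times(\{0,1\}\cup\{\lambda\})\times\Gamma\to Q\times\Gamma^*$ is a partial transition function, $\nu: Q\times(\{0,1\}\cup\{\lambda\})\times\Gamma\to\{0,1\}^*$ is the output function, $q_0$ is the start state, and $c\in\mathbb{N}$ bounds the number of consecutive $\lambda$-transitions (transitions reading no input bit, which pop the top stack symbol and output nothing). On each transition the top stack symbol is replaced by the string given by $\delta$; $z_0$ is never removed. Determinism: for each state $q$ and top symbol $a$, either $\delta(q,\lambda,a)$ is undefined or $\delta(q,b,a)$ is undefined for both $b\in\{0,1\}$. After each input bit all available $\lambda$-transitions are performed. $C(w)$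 denotes the output on input $w$ from $q_0$ with stack $z_0$, and $\delta_Q(w)$ the resulting state. $C$ is information lossless (ILPDC) if $w\mapsto (C(w),\delta_Q(w))$ is injective. A unary-stack PDC (UPDC) is identical but with stack alphabet $\{0,z_0\}$; information lossless ones are ILUPDCs. The constant $c$ of $N$ may differ from that of $C$. *)

From mathcomp Require Import all_boot.

Set Implicit Arguments.
Unset Strict Implicit.
Unset Printing Implicit Defensive.

Record fst (Q : finType) := FST {
  fst_start : Q;
  fst_delta : Q -> bool -> Q;
  fst_nu    : Q -> bool -> seq bool }.

Definition fst_run (Q : finType) (T : fst Q) (x : seq bool) : Q * seq bool :=
  foldl (fun (p : Q * seq bool) b =>
           (fst_delta T p.1 b, p.2 ++ fst_nu T p.1 b))
        (fst_start T, [::]) x.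

Definition fst_state (Q : finType) (T : fst Q) (x : seq bool) : Q := (fst_run T x).1.
Definition fst_out (Q : finType) (T : fst Q) (x : seq bool) : seq bool := (fst_run T x).2.

Definition ILFST (Q : finType) (T : fst Q) : Prop :=
  injective (fun x => (fst_out T x, fst_state T x)).

(* symbols. The stack alphabet is [option A]; [None] is the bottom     *)
(* symbol z0. Input letters: [Some b] reads bit b, [None] is lambda.   *)
(* Stacks are sequences with the top symbol at the head.               *)
Record pdc (A : eqType) (Q : finType) := PDC {
  pdc_start : Q;
  pdc_delta : Q -> option bool -> option A -> option (Q * seq (option A));
  pdc_nu    : Q -> option bool -> option A -> seq bool;
  pdc_c     : nat }.

Section PDCSemantics.
Variables (A : eqType) (Q : finType) (C : pdc A Q).

Definition pconf := (Q * seq (option A) * seq bool)%type.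

Definition pdc_step_in (cf : pconf) (b : bool) : option pconf :=
  match cf with
  | (q, st, o) =>
    match st with
    | [::] => None
    | a :: rest =>
      match pdc_delta C q (Some b) a with
      | Some (q', s) => Some (q', s ++ rest, o ++ pdc_nu C q (Some b) a)
      | None => None
      end
    end
  end.

Fixpoint pdc_lam (n : nat) (cf : pconf) : option pconf :=
  match cf with
  | (q, st, o) =>
    match st with
    | [::] => None
    | a :: rest =>
      match pdc_delta C q None a with
      | None => Some cf
      | Some (q', s) =>
        match n with
        | 0 => None
        | n'.+1 => pdc_lam n' (q', s ++ rest, o ++ pdc_nu C q None a)
        end
      end
    end
  end.

Definition pdc_run (w : seq bool) : option pconf :=
  foldl (fun (ocf : option pconf) b =>
           match ocf with
           | None => None
           | Some cf =>
             match pdc_step_in cf b with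
             | None => None
             | Some cf' => pdc_lam (pdc_c C) cf'
             end
           end)
        (Some (pdc_start C, [:: None], [::])) w.

Definition pdc_out (w : seq bool) : seq bool :=
  if pdc_run w is Some (_, _, o) then o else [::].

Definition pdc_state (w : seq bool) : Q :=
  if pdc_run w is Some (q, _, _) then q else pdc_start C.

(* Well-formedness of a pushdown compressor:
   - determinism;
   - lambda-transitions pop the top symbol (z0 is never removed) and
     output nothing;
   - z0 is never removed: a transition on top z0 puts back a string
     ending with z0 (and no other z0), a transition on a non-bottom
     symbol pushes no z0;
   - the number of consecutive lambda-transitions is bounded by c and
     the machine never gets stuck, i.e. C(w) is defined for every w. *)
Definition pdc_ok : Prop :=
  [/\ (forall q a, pdc_delta C q None a = None \/
         (pdc_delta C q (Some false) a = None /\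
          pdc_delta C q (Some true) a = None)),
      (forall q a q' s, pdc_delta C q None a = Some (q', s) ->
         s = (if a is None then [:: None] else [::]) /\
         pdc_nu C q None a = [::]),
      (forall q ob a q' s, pdc_delta C q ob a = Some (q', s) ->
         match a return Prop with
         | None => exists2 s', s = rcons s' None & None \notin s'
         | Some _ => None \notin s
         end)
    & (forall w, pdc_run w <> None)].

Definition ILgen : Prop :=
  pdc_ok /\ injective (fun w => (pdc_out w, pdc_state w)).

End PDCSemantics.

(* PDC: stack alphabet {0,1,z0} = option bool (Some false, Some true, None) *)
(* UPDC: stack alphabet {0,z0} = option unit (Some tt, None) *)

Definition ILPDC (Q : finType) (C : pdc bool Q) : Prop := ILgen C.
Definition ILUPDC (Q : finType) (C : pdc unit Q) : Prop := ILgen C.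

From mathcomp Require Import all_boot zify.

Set Implicit Arguments.
Unset Strict Implicit.
Unset Printing Implicit Defensive.

(* The composed machine N runs T and feeds each block of T's output straight
   to C.  One input bit makes T emit at most L bits, on which C performs at
   most L(c+1) pops; so N can keep the top L(c+1) symbols of C's stack in its
   finite control, run C's transitions there, and keep the rest of C's stack,
   over the same stack alphabet, on its own stack, refilling the buffer by
   lambda-pops after each bit.  N's state records the states of T and C, so
   (N(x), delta_N(x)) determines (C(T(x)), delta_C(T(x))) and delta_T(x), and
   the losslessness of C, then of T, recovers x. *)

Lemma val_insub_bseq n (T : Type) (s : seq T) :
  size s <= n -> insub_bseq n s = s :> seq T.
Proof. by move=> le_s_n; rewrite /insub_bseq insubdK. Qed.

Lemma fst_state_rcons (QT : finType) (T : fst QT) x b :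
  fst_state T (rcons x b) = fst_delta T (fst_state T x) b.
Proof. by rewrite /fst_state /fst_run -cats1 foldl_cat. Qed.

Lemma fst_out_rcons (QT : finType) (T : fst QT) x b :
  fst_out T (rcons x b) = fst_out T x ++ fst_nu T (fst_state T x) b.
Proof. by rewrite /fst_out /fst_state /fst_run -cats1 foldl_cat. Qed.

Section PDCExec.
Variables (A : eqType) (Q : finType) (C : pdc A Q).
Implicit Types (cf : pconf A Q) (ocf : option (pconf A Q)) (o u w : seq bool).

Definition pdc_feed ocf b : option (pconf A Q) :=
  if ocf is Some cf then obind (pdc_lam C (pdc_c C)) (pdc_step_in C cf b) else None.

Definition pdc_exec cf u : option (pconf A Q) := foldl pdc_feed (Some cf) u.

Lemma pdc_feed_Some cf b :
  pdc_feed (Some cf) b = obind (pdc_lam C (pdc_c C)) (pdc_step_in C cf b).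
Proof. by []. Qed.

Lemma foldl_feed_None u : foldl pdc_feed None u = None.
Proof. by elim: u. Qed.

Lemma pdc_exec_cons cf b u :
  pdc_exec cf (b :: u) = if pdc_feed (Some cf) b is Some cf' then pdc_exec cf' u else None.
Proof. by rewrite /pdc_exec /=; case: obind => //; apply: foldl_feed_None. Qed.

Lemma pdc_run_rcons w b : pdc_run C (rcons w b) = pdc_feed (pdc_run C w) b.
Proof. by rewrite /pdc_run -cats1 foldl_cat. Qed.

Lemma pdc_run_cat cf w u : pdc_run C w = Some cf -> pdc_run C (w ++ u) = pdc_exec cf u.
Proof. by move=> run_w; rewrite /pdc_run foldl_cat -/(pdc_run C w) run_w. Qed.

Definition cat_out o cf : pconf A Q := (cf.1, o ++ cf.2).
Arguments cat_out : simpl never.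

Lemma step_in_cat_out o cf b :
  pdc_step_in C (cat_out o cf) b = omap (cat_out o) (pdc_step_in C cf b).
Proof.
case: cf => [[q [|a st]] o1] //=.
by case: pdc_delta => [[q' s]|] //=; rewrite /cat_out /= catA.
Qed.

Lemma lam_cat_out o n cf :
  pdc_lam C n (cat_out o cf) = omap (cat_out o) (pdc_lam C n cf).
Proof.
elim: n cf => [|n IHn] [[q [|a st]] o1] //=; case: pdc_delta => [[q' s]|] //=.
by rewrite -catA -(IHn (_, _, _)).
Qed.

Lemma feed_cat_out o ocf b :
  pdc_feed (omap (cat_out o) ocf) b = omap (cat_out o) (pdc_feed ocf b).
Proof.
case: ocf => [cf|] //.
rewrite [omap _ (Some cf)]/= !pdc_feed_Some step_in_cat_out.
by case: pdc_step_in => [cf'|] //; apply: lam_cat_out.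
Qed.

Lemma exec_cat_out o cf u :
  pdc_exec (cat_out o cf) u = omap (cat_out o) (pdc_exec cf u).
Proof.
rewrite /pdc_exec -[Some (cat_out o cf)]/(omap (cat_out o) (Some cf)).
by elim: u (Some cf) => [|b u IHu] ocf //=; rewrite feed_cat_out IHu.
Qed.

(* Frame property: [n] lambda-transitions, and a run on [u] (at most
   [size u * (pdc_c C).+1] transitions), never inspect the stack below [st]. *)
Lemma lam_frame n q st r o q' X o' :
  pdc_lam C n (q, st ++ r, o) = Some (q', X, o') -> n < size st ->
  exists st', [/\ pdc_lam C n (q, st, o) = Some (q', st', o'), X = st' ++ r
                & size st - n <= size st'].
Proof.
elim: n q st o => [|n IHn] q [|a st] o //=; case: pdc_delta => [[q1 s]|] //=.
- by move=> [<- <- <-] _; exists (a :: st); rewrite subn0.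
- rewrite catA => /IHn; rewrite size_cat /= => IH lt_n_st.
  have [|st' [-> -> le_st']] := IH; first by lia.
  by exists st'; split => //; lia.
- by move=> [<- <- <-] _; exists (a :: st); split => //; apply: leq_subr.
Qed.

Lemma exec_frame u q st r o q' X o' :
  pdc_exec (q, st ++ r, o) u = Some (q', X, o') -> size u * (pdc_c C).+1 < size st ->
  exists st', pdc_exec (q, st, o) u = Some (q', st', o') /\ X = st' ++ r.
Proof.
elim: u q st o => [|b u IHu] q st o; first by move=> [<- <- <-]; exists st.
rewrite !pdc_exec_cons /= mulSn; case: st => [|a st] //=.
case: pdc_delta => [[q1 s]|] //=; rewrite catA.
case E: pdc_lam => [[[q2 X2] o2]|] // exec_u lt_st.
have [|st2 [-> eq_X2 le_st2]] := lam_frame E; first by rewrite size_cat /=; lia.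
apply: IHu; first by rewrite -eq_X2.
by move: le_st2; rewrite size_cat /=; lia.
Qed.

End PDCExec.

Section BottomedStacks.
Variable A : eqType.
Implicit Types (s r : seq (option A)) (a : option A).

Fixpoint bottomed s : bool :=
  match s with
  | [::] => false
  | None :: r => r == [::]
  | Some _ :: r => bottomed r
  end.

Definition bottom_tail a : seq (option A) := if a is None then [:: None] else [::].

Lemma bottomed_cat s r : None \notin s -> bottomed (s ++ r) = bottomed r.
Proof. by elim: s => [|[x|] s IHs] //; rewrite in_cons negb_or => /andP[_ /IHs]. Qed.

Lemma bottomed_rcons s : None \notin s -> bottomed (rcons s None).
Proof. by move=> s_nz; rewrite -cats1 bottomed_cat. Qed.

Lemma bottomed_catl s r : bottomed (s ++ r) -> bottomed r -> None \notin s.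
Proof.
elim: s => [|[x|] s IHs] //=.
by case: s r {IHs} => [|? ?] [|? ?].
Qed.

Lemma filter_isSome_id s : None \notin s -> filter isSome s = s.
Proof. by elim: s => [|[x|] s IHs] //=; rewrite in_cons negb_or => /andP[_ /IHs ->]. Qed.

Lemma bottomedE s : bottomed s -> s = rcons (filter isSome s) None.
Proof. by elim: s => [|[x|] s IHs] //= => [/IHs <-|/eqP ->]. Qed.

Lemma bottomed_bottom_tail a r : bottomed (a :: r) -> bottomed (bottom_tail a ++ r).
Proof. by case: a => [x|] //= /eqP ->. Qed.

Lemma bottomed_restack s a r : bottomed (a :: r) -> bottomed (s ++ r) ->
  s ++ r = filter isSome s ++ bottom_tail a ++ r.
Proof.
case: a => [x|] /= bot_r; first by move/bottomed_catl/(_ bot_r)/filter_isSome_id ->.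
by move: bot_r => /eqP -> /=; rewrite !cats0 cats1 => /bottomedE.
Qed.

End BottomedStacks.

Section BottomedRuns.
Variables (A : eqType) (Q : finType) (C : pdc A Q).
Hypothesis okC : pdc_ok C.

Lemma bottomed_delta q ob a q' s r :
  pdc_delta C q ob a = Some (q', s) -> bottomed (a :: r) -> bottomed (s ++ r).
Proof.
case: okC => _ _ delta_bottom _ /delta_bottom; case: a => [x|] /=.
  by move=> s_nz; rewrite bottomed_cat.
by move=> [s' -> s'_nz] /eqP ->; rewrite cats0 bottomed_rcons.
Qed.

Lemma bottomed_step_in cf b cf' :
  pdc_step_in C cf b = Some cf' -> bottomed cf.1.2 -> bottomed cf'.1.2.
Proof.
case: cf => [[q [|a r]] o] //=.
by case E: pdc_delta => [[q' s]|] // [<-]; apply: bottomed_delta E.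
Qed.

Lemma bottomed_lam n cf cf' :
  pdc_lam C n cf = Some cf' -> bottomed cf.1.2 -> bottomed cf'.1.2.
Proof.
elim: n cf => [|n IHn] [[q [|a r]] o] //=; case E: pdc_delta => [[q' s]|] //.
- by move=> [<-].
- by move/IHn => IH /(bottomed_delta E)/IH.
- by move=> [<-].
Qed.

Lemma bottomed_exec cf u cf' :
  pdc_exec C cf u = Some cf' -> bottomed cf.1.2 -> bottomed cf'.1.2.
Proof.
elim: u cf => [|b u IHu] cf; first by move=> [<-].
rewrite pdc_exec_cons /pdc_feed; case E: pdc_step_in => [cf1|] //=.
case E2: pdc_lam => [cf2|] // /IHu IH.
by move/(bottomed_step_in E)/(bottomed_lam E2)/IH.
Qed.

Lemma bottomed_run w cf : pdc_run C w = Some cf -> bottomed cf.1.2.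
Proof. by move/bottomed_exec; apply. Qed.

End BottomedRuns.

Section Composition.
Variables (A : finType) (Q QT : finType) (C : pdc A Q) (T : fst QT).

Definition fst_nu_max : nat := \max_(p : QT * bool) size (fst_nu T p.1 p.2).

Lemma size_fst_nu q b : size (fst_nu T q b) <= fst_nu_max.
Proof. exact: (leq_bigmax (F := fun p : QT * bool => size (fst_nu T p.1 p.2)) (q, b)). Qed.

Definition window : nat := fst_nu_max * (pdc_c C).+1.

Definition buffer : predArgType := {bseq window of option A}.

Definition comp_state : finType := (QT * Q * buffer)%type.

Definition refill (bf : buffer) (a : option A) : bool := (size bf < window) && (a != None).

Definition simulate qT qC (bf : buffer) a b : option (pconf A Q) :=
  pdc_exec C (qC, rcons bf a, [::]) (fst_nu T qT b).

(* z0 is never buffered: [filter isSome] removes it from the simulated stack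
   and [bottom_tail a] puts it back if it was the popped symbol [a]. *)
Definition comp_delta (s : comp_state) ob a : option (comp_state * seq (option A)) :=
  let: (qT, qC, bf) := s in
  if refill bf a then
    if ob is None then Some ((qT, qC, insub_bseq window (rcons bf a)), [::]) else None
  else if ob is Some b then
    if simulate qT qC bf a b is Some (qC', st, _) then
      let: top := filter isSome st in
      Some ((fst_delta T qT b, qC', insub_bseq window (take window top)),
            drop window top ++ bottom_tail a)
    else None
  else None.

Definition comp_nu (s : comp_state) ob a : seq bool :=
  let: (qT, qC, bf) := s in
  if (ob, refill bf a) is (Some b, false) then
    if simulate qT qC bf a b is Some (_, _, o) then o else [::]
  else [::].

Definition comp_pdc : pdc A comp_state :=
  PDC (fst_start T, pdc_start C, insub_bseq window [::]) comp_delta comp_nu window.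

Section CompositionCorrect.
Hypothesis okC : pdc_ok C.

Let N := comp_pdc.

Definition tracks x qC (bf : buffer) (Nst : seq (option A)) o : Prop :=
  [/\ pdc_run C (fst_out T x) = Some (qC, bf ++ Nst, o), bottomed Nst & None \notin bf].

Lemma comp_lam_tracks n x qC bf Nst o : tracks x qC bf Nst o -> window <= n + size bf ->
  exists bf' a rest, [/\ pdc_lam N n ((fst_state T x, qC, bf), Nst, o) =
                           Some ((fst_state T x, qC, bf'), a :: rest, o),
                         tracks x qC bf' (a :: rest) o & ~~ refill bf' a].
Proof.
elim: n bf Nst => [|n IHn] bf [|a rest] [run_x bot_Nst bf_nz] //= le_window.
- have stop : ~~ refill bf a by rewrite /refill ltnNge -[size bf]add0n le_window.
  by rewrite (negbTE stop); exists bf, a, rest.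
- case: (boolP (refill bf a)) => [/andP[room a_nz] | stop]; last first.
    by exists bf, a, rest.
  have bf'E : insub_bseq window (rcons bf a) = rcons bf a :> seq _.
    by rewrite val_insub_bseq // size_rcons.
  rewrite cats0 /=; apply: IHn; last by rewrite bf'E size_rcons addnS.
  split; rewrite ?bf'E.
  + by rewrite cat_rcons.
  + by case: a a_nz bot_Nst {run_x bf'E}.
  + by rewrite membsE bf'E -cats1 mem_cat negb_or bf_nz mem_seq1 eq_sym.
Qed.

Lemma simulate_run x qC bf a rest o b :
  tracks x qC bf (a :: rest) o -> ~~ refill bf a ->
  exists q' st' o', simulate (fst_state T x) qC bf a b = Some (q', st', o') /\
    pdc_run C (fst_out T (rcons x b)) = Some (q', st' ++ rest, o ++ o').
Proof.
move=> [run_x bot_Nst bf_nz] stop.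
set u := fst_nu T (fst_state T x) b.
have run_u : pdc_run C (fst_out T (rcons x b)) = pdc_exec C (qC, bf ++ a :: rest, o) u.
  by rewrite fst_out_rcons (pdc_run_cat _ run_x).
have [[[q' X] o2] exec_u] : exists cf, pdc_exec C (qC, bf ++ a :: rest, o) u = Some cf.
  case: okC => _ _ _ /(_ (fst_out T (rcons x b))); rewrite run_u.
  by case: pdc_exec => [cf|] // _; exists cf.
have [st' [exec_top eq_X]] :
    exists st', pdc_exec C (qC, rcons bf a, o) u = Some (q', st', o2) /\ X = st' ++ rest.
  (* either the buffer is full and C's run stays within [rcons bf a], or [a] is
     z0 and [rest] is empty *)
  move: stop; rewrite /refill negb_and -leqNgt negbK => /orP[full | /eqP a_z].
    apply: exec_frame; first by rewrite cat_rcons.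
    by rewrite size_rcons ltnS (leq_trans _ full) // leq_mul2r size_fst_nu orbT.
  move: bot_Nst exec_u; rewrite a_z /= => /eqP-> exec_u.
  by exists X; rewrite cats0 -cats1.
have := exec_cat_out C o (qC, rcons bf a, [::]) u.
rewrite /cat_out /= cats0 exec_top /simulate -/u.
case: pdc_exec => [[[q3 st3] o3]|] //= [<- <- eq_o2].
by exists q', st', o3; rewrite run_u exec_u eq_X eq_o2.
Qed.

Lemma comp_step_in_tracks x b qC bf a rest o :
  tracks x qC bf (a :: rest) o -> ~~ refill bf a ->
  exists qC' bf' Nst' o',
    pdc_step_in N ((fst_state T x, qC, bf), a :: rest, o) b =
      Some ((fst_state T (rcons x b), qC', bf'), Nst', o') /\
    tracks (rcons x b) qC' bf' Nst' o'.
Proof.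
move=> trk stop; have [_ bot_Nst _] := trk.
have [q' [st' [o' [sim run']]]] := simulate_run b trk stop.
have bot' : bottomed (st' ++ rest) := bottomed_run okC run'.
set top := filter isSome st'.
have topE : insub_bseq window (take window top) = take window top :> seq _.
  by rewrite val_insub_bseq // size_take_min geq_minl.
exists q', (insub_bseq window (take window top)).
exists ((drop window top ++ bottom_tail a) ++ rest), (o ++ o').
rewrite /= (negbTE stop) sim fst_state_rcons; split => //; split.
- by rewrite run' topE -catA catA cat_take_drop -bottomed_restack.
- rewrite -catA bottomed_cat ?bottomed_bottom_tail //.
  by apply/negP => /mem_drop; rewrite mem_filter.
- by rewrite membsE topE; apply/negP => /mem_take; rewrite mem_filter.
Qed.

Lemma comp_run_tracks x : exists qC bf a rest o,
  [/\ pdc_run N x = Some ((fst_state T x, qC, bf), a :: rest, o),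
      tracks x qC bf (a :: rest) o & ~~ refill bf a].
Proof.
elim/last_ind: x => [|x b [qC [bf [a [rest [o [run_x trk stop]]]]]]].
  exists (pdc_start C), (insub_bseq window [::]), None, [::], [::].
  split => //; last by rewrite /refill andbF.
  by rewrite /tracks membsE val_insub_bseq.
have [qC' [bf' [Nst' [o' [step trk']]]]] := comp_step_in_tracks b trk stop.
have [bf'' [a' [rest' [lam trk'' stop']]]] := comp_lam_tracks trk' (leq_addr _ window).
exists qC', bf'', a', rest', o'.
by rewrite pdc_run_rcons run_x pdc_feed_Some step /= lam.
Qed.

Lemma comp_pdc_ok : pdc_ok N.
Proof.
split => [[[qT qC] bf] a | [[qT qC] bf] a q' s | [[qT qC] bf] ob a q' s | x] /=.
- by case: refill; [right | left].
- case: (boolP (refill bf a)) => // /andP[_ a_nz] [_ <-].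
  by case: a a_nz.
- case: (boolP (refill bf a)) => [/andP[_ a_nz] | _].
    by case: ob => // -[_ <-]; case: a a_nz.
  case: ob => // b; case: simulate => [[[qC' st] o]|] // [_ <-].
  have top_nz : None \notin drop window (filter isSome st).
    by apply/negP => /mem_drop; rewrite mem_filter.
  case: a => [y|] /=; first by rewrite cats0.
  by exists (drop window (filter isSome st)); rewrite ?cats1.
- by have [? [? [? [? [? [-> _ _]]]]]] := comp_run_tracks x.
Qed.

Lemma pdc_out_comp x : pdc_out N x = pdc_out C (fst_out T x).
Proof.
have [qC [bf [a [rest [o [run_N [run_C _ _] _]]]]]] := comp_run_tracks x.
by rewrite /pdc_out run_N run_C.
Qed.

Lemma pdc_state_comp x :
  exists bf, pdc_state N x = (fst_state T x, pdc_state C (fst_out T x), bf).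
Proof.
have [qC [bf [a [rest [o [run_N [run_C _ _] _]]]]]] := comp_run_tracks x.
by exists bf; rewrite /pdc_state run_N run_C.
Qed.

Lemma comp_lossless :
  injective (fun w => (pdc_out C w, pdc_state C w)) -> ILFST T ->
  injective (fun x => (pdc_out N x, pdc_state N x)).
Proof.
move=> injC injT x y [out_xy].
have [bx ->] := pdc_state_comp x; have [by_ ->] := pdc_state_comp y.
case=> stateT_xy stateC_xy _.
apply: injT => /=; rewrite stateT_xy; congr (_, _).
by apply: injC => /=; rewrite -!pdc_out_comp out_xy stateC_xy.
Qed.

End CompositionCorrect.
End Composition.

Lemma ILgen_comp (A Q QT : finType) (C : pdc A Q) (T : fst QT) :
  ILgen C -> ILFST T ->
  exists (QN : finType) (N : pdc A QN),
    ILgen N /\ forall x, pdc_out N x = pdc_out C (fst_out T x).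
Proof.
move=> [okC injC] injT; exists _, (comp_pdc C T); split.
  by split; [apply: comp_pdc_ok | apply: comp_lossless].
exact: pdc_out_comp.
Qed.

Theorem mainTheorem2 :
  (forall (Q : finType) (C : pdc bool Q) (QT : finType) (T : fst QT),
      ILPDC C -> ILFST T ->
      exists (QN : finType) (N : pdc bool QN),
        ILPDC N /\ forall x : seq bool, pdc_out N x = pdc_out C (fst_out T x)) /\
  (forall (Q : finType) (C : pdc unit Q) (QT : finType) (T : fst QT),
      ILUPDC C -> ILFST T ->
      exists (QN : finType) (N : pdc unit QN),
        ILUPDC N /\ forall x : seq bool, pdc_out N x = pdc_out C (fst_out T x)).
Proof. by split=> Q C QT T; apply: ILgen_comp. Qed.
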